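(* Let $\mathcal T$ be a good triangulation of $\mathcal C_G$ and let $S$ be any simplex of $\mathcal T$. Then the graph $(V,D(S))$ contains no cycle, i.e. there is no cycle of double edges.
   Context: For a finite undirected multigraph $G=(V,E)$ (loops, parallel edges and isolated nodes allowed) with $n=|V|$, $m=|E|$, work in $\mathbb{R}^V\times\mathbb{R}^E\cong\mathbb{R}^{n+m}$ with standard basis vectors $e_u$ ($u\in V$), $e_f$ ($f\in E$). Fix for each edge $f$ an ordering $(u,v)$ of its endpoints ($u=v$ for a loop) and set $\widetilde e_f=e_u+e_v-e_f$, $\overleftarrow e_f=e_u-e_v+e_f$, $\overrightarrow e_f=-e_u+e_v+e_f$ (so for a loop $\overleftarrow e_f=\overrightarrow e_f=e_f$). The cosmological polytope $\mathcal C_G$ is the convex hull of $\{e_f,\widetilde e_f,\overleftarrow e_f,\overrightarrow e_f: f\in E\}\cup\{e_u: u\in V\}$; these are exactly its lattice points, and it is an $(n+m-1)$-dimensional polytope in the hyperplane $\sum_i x_i=1$. A good triangulation of $\mathcal C_G$ is a regular triangulation (induced by a height function on the lattice points of $\mathcal C_G$) whose vertex set is the set of all lattice points of $\mathcal C_G$ and which contains the standard simplex $\mathrm{conv}\{e_u,e_f: u\in V, f\in E\}$ as a maximal cell; simplices are identified with their vertex sets. For a simplex $S\in\mathcal T$: the selected nodes are $V(S)=\{u\in V: e_u\in S\}$; the squiggly edges $\widetilde E(S)=\{f:\widetilde e_f\in S\}$; the selected edges $\widehat E(S)=\{f: e_f\in S\}$; for non-loop edges $f$, $f\in\overleftarrow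 E(S)$ iff $\overleftarrow e_f\in S$ and $f\in\overrightarrow E(S)$ iff $\overrightarrow e_f\in S$ (loops are never in $\overleftarrow E(S)\cup\overrightarrow E(S)$); the double edges are $D(S)=(\overleftarrow E(S)\cup\overrightarrow E(S))\cap\widehat E(S)$. *)

From mathcomp Require Import all_boot all_order all_algebra.
From mathcomp Require Import reals.
Set Implicit Arguments. Unset Strict Implicit. Unset Printing Implicit Defensive.
Import Order.TTheory GRing.Theory Num.Theory.
Local Open Scope ring_scope.

(* A finite multigraph: node type V, edge type E, each edge f with a fixed
   ordering (src f, tgt f) of its endpoints; loops: src f = tgt f. *)

Section Cosmo.
Variables (R : realType) (V E : finType) (src tgt : E -> V).

Definition pt := {ffun (V + E)%type -> R}.

Definition ev (u : V) : pt := [ffun i => if i == inl u then 1 else 0].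
Definition ee (f : E) : pt := [ffun i => if i == inr f then 1 else 0].
Definition etilde (f : E) : pt := ev (src f) + ev (tgt f) - ee f.
Definition eleft (f : E) : pt := ev (src f) - ev (tgt f) + ee f.
Definition eright (f : E) : pt := - ev (src f) + ev (tgt f) + ee f.

(* the lattice points of the cosmological polytope C_G *)
Definition isLP (x : pt) : bool :=
  [exists u, x == ev u] ||
  [exists f, [|| x == ee f, x == etilde f, x == eleft f | x == eright f]].

Definition stdS (x : pt) : bool := [exists u, x == ev u] || [exists f, x == ee f].

Definition lps : seq pt :=
  undup ([seq ev u | u <- enum V] ++ [seq ee f | f <- enum E] ++
         [seq etilde f | f <- enum E] ++ [seq eleft f | f <- enum E] ++
         [seq eright f | f <- enum E]).

Definition lin (c x : pt) : R := \sum_i c i * x i.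

(* S (a set of lattice points) is a cell of the regular subdivision
   induced by the height function omega: the set of points where some affine
   function lying weakly below omega on all lattice points agrees with omega *)
Definition is_cell (omega : pt -> R) (S : pred pt) : Prop :=
  exists (c : pt) (b : R),
    (forall a, isLP a -> lin c a + b <= omega a) /\
    (forall x, S x = isLP x && (lin c x + b == omega x)).

Definition aff_indep (S : pred pt) : Prop :=
  forall lam : pt -> R,
    \sum_(x <- lps | S x) lam x = 0 ->
    (forall i, \sum_(x <- lps | S x) lam x * x i = 0) ->
    forall x, isLP x -> S x -> lam x = 0.

(* good triangulation: the regular subdivision induced by omega is a
   triangulation (all cells are simplices), every lattice point is used as a
   vertex, and the standard simplex is a maximal cell *)
Definition good_triangulation (omega : pt -> R) : Prop :=
  [/\ forall S, is_cell omega S -> aff_indep S,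
      forall a, isLP a -> exists S, is_cell omega S /\ S a,
      is_cell omega stdS &
      forall S, is_cell omega S -> (forall x, stdS x -> S x) ->
        forall x, S x -> stdS x].

Definition is_loop (f : E) : bool := src f == tgt f.

Definition double_edges (S : pred pt) (f : E) : bool :=
  [&& ~~ is_loop f, S (ee f) & S (eleft f) || S (eright f)].

Definition has_cycle (D : pred E) : Prop :=
  exists k (vs : 'I_k -> V) (es : 'I_k -> E),
    [/\ 0 < k, injective vs, injective es,
        forall i, D (es i) &
        forall i, (src (es i) = vs i /\ tgt (es i) = vs (ordS i)) \/
                  (src (es i) = vs (ordS i) /\ tgt (es i) = vs i)]%N.

End Cosmo.

From mathcomp Require Import all_boot all_order all_algebra.
From mathcomp Require Import reals ring.
Set Implicit Arguments. Unset Strict Implicit. Unset Printing Implicit Defensive.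
Import Order.TTheory GRing.Theory Num.Theory.
Local Open Scope ring_scope.

(* A double edge f of S joining u and v puts e_f and a point e_f +- (e_u - e_v)
   into S.  Around a cycle of double edges the vectors e_u - e_v telescope to 0,
   so suitably signed differences of these pairs give an affine dependence
   among the vertices of S in which e_f carries a nonzero coefficient. *)

Lemma sum_seq_pick (R : pzRingType) (T : eqType) (s : seq T) (P : pred T)
    (p : T) (F : T -> R) :
  uniq s -> p \in s -> P p -> \sum_(x <- s | P x) (x == p)%:R * F x = F p.
Proof.
move=> s_uniq ps Pp.
rewrite -big_filter (bigD1_seq p) ?filter_uniq ?mem_filter ?Pp //=.
by rewrite eqxx mul1r big1 ?addr0 // => x /negbTE ->; rewrite mul0r.
Qed.

Lemma sqr_eq1_neq0 (R : nzRingType) (t : R) : t * t = 1 -> t != 0.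
Proof. by apply: contra_eq_neq => ->; rewrite mul0r eq_sym oner_neq0. Qed.

Lemma sum_cycle_diff (Z : zmodType) (k : nat) (a : 'I_k -> Z) :
  \sum_i (a i - a (ordS i)) = 0.
Proof. by rewrite sumrB (reindex_inj (@ordS_inj k)) subrr. Qed.

Section CosmologicalPolytope.
Variables (R : realType) (V E : finType) (src tgt : E -> V).
Local Notation pt := (pt R V E).

Lemma ee_inj : injective (fun f : E => ee R V f).
Proof.
move=> f g /(congr1 (fun x : pt => x (inr f))); rewrite !ffunE eqxx.
by case: eqP => [[->] | _ /eqP]; rewrite ?oner_eq0.
Qed.

Lemma mem_lps (x : pt) : isLP src tgt x -> x \in lps R src tgt.
Proof.
case/orP => [/existsP[u /eqP->] | /existsP[f /or4P[] /eqP->]];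
  by rewrite mem_undup !mem_cat map_f ?mem_enum ?orbT.
Qed.

Lemma cell_isLP (omega : pt -> R) (S : pred pt) :
  is_cell src tgt omega S -> forall x, S x -> isLP src tgt x.
Proof. by case=> c [b [_ defS]] x; rewrite defS => /andP[]. Qed.

Lemma aff_indep_pair_coef (S : pred pt) (I : finType) (c : I -> R)
    (p q : I -> pt) :
  aff_indep src tgt S -> (forall x, S x -> isLP src tgt x) ->
  (forall i, S (p i) /\ S (q i)) ->
  (forall j, \sum_i c i * (p i j - q i j) = 0) ->
  forall x, S x -> \sum_i c i * ((x == p i)%:R - (x == q i)%:R) = 0.
Proof.
move=> indS S_LP Spq dep x Sx.
have pick y (F : pt -> R) :
    S y -> \sum_(z <- lps R src tgt | S z) (z == y)%:R * F z = F y.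
  by move=> Sy; rewrite sum_seq_pick ?undup_uniq ?mem_lps ?S_LP.
apply: (indS (fun y => \sum_i c i * ((y == p i)%:R - (y == q i)%:R))) => //;
  last exact: S_LP.
- rewrite exchange_big big1 //= => i _; rewrite -mulr_sumr.
  under eq_bigr => y _ do rewrite -[X in X - _]mulr1 -[X in _ - X]mulr1.
  by rewrite sumrB !pick ?(Spq i).1 ?(Spq i).2 // subrr mulr0.
- move=> j; under eq_bigr => y _ do rewrite mulr_suml.
  rewrite exchange_big /= -[RHS](dep j); apply: eq_bigr => i _.
  under eq_bigr => y _ do rewrite -mulrA mulrBl.
  by rewrite -mulr_sumr sumrB !pick ?(Spq i).1 ?(Spq i).2.
Qed.

Lemma double_edge_partner (S : pred pt) (f : E) (u v : V) :
  double_edges src tgt S f ->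
  (src f = u /\ tgt f = v) \/ (src f = v /\ tgt f = u) ->
  exists q t, [/\ S q, t * t = 1, forall g, q != ee R V g
                 & forall j, q j = ee R V f j + t * (ev R E u j - ev R E v j)].
Proof.
move=> /and3P[not_loop Sf S_lr] ends.
have uv : u != v by case: ends not_loop => -[<- <-]; rewrite /is_loop // eq_sym.
suff [q [t [Sq tt qE]]] : exists q t, [/\ S q, t * t = 1
    & forall j, q j = ee R V f j + t * (ev R E u j - ev R E v j)].
  exists q, t; split=> // g; apply/eqP => qg; move: (qE (inl u)).
  have inl_uv : (inl u == inl v :> (V + E)%type) = false.
    by apply/eqP => -[/eqP]; rewrite (negbTE uv).
  rewrite qg !ffunE /= eqxx inl_uv add0r subr0 mulr1 => t0.
  by move: (sqr_eq1_neq0 tt); rewrite -t0 eqxx.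
case: ends => -[su tv]; case Sl: (S (eleft R src tgt f)); rewrite ?Sl in S_lr.
- exists (eleft R src tgt f), 1; split=> // [|j]; first by rewrite mulr1.
  by rewrite !ffunE su tv; ring.
- exists (eright R src tgt f), (-1); split=> // [|j]; first by rewrite mulrNN mulr1.
  by rewrite !ffunE su tv; ring.
- exists (eleft R src tgt f), (-1); split=> // [|j]; first by rewrite mulrNN mulr1.
  by rewrite !ffunE su tv; ring.
- exists (eright R src tgt f), 1; split=> // [|j]; first by rewrite mulr1.
  by rewrite !ffunE su tv; ring.
Qed.

End CosmologicalPolytope.

Arguments ee_inj {R V E}.

Theorem mainTheorem4 (R : realType) (V E : finType) (src tgt : E -> V)
    (omega : pt R V E -> R) :
  good_triangulation src tgt omega ->
  forall S : pred (pt R V E), is_cell src tgt omega S ->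
  ~ has_cycle src tgt (double_edges src tgt S).
Proof.
move=> [indep _ _ _] S cellS [k [vs [es [k_gt0 _ es_inj Des ends]]]].
have /fin_all_exists[q /fin_all_exists[t Hqt]] :=
  fun i => double_edge_partner (Des i) (ends i).
have Sq i : S (q i) by case: (Hqt i).
have See i : S (ee R V (es i)) by case/and3P: (Des i).
have dep j : \sum_i t i * (q i j - ee R V (es i) j) = 0.
  rewrite -[RHS](sum_cycle_diff (fun i => ev R E (vs i) j)).
  apply: eq_bigr => i _; have [_ tt _ qE] := Hqt i.
  by rewrite qE addrC addKr mulrA tt mul1r !ffunE.
pose i0 := Ordinal k_gt0.
have := aff_indep_pair_coef (indep S cellS) (cell_isLP cellS)
  (fun i => conj (Sq i) (See i)) dep (See i0).
rewrite (bigD1 i0) //= big1 => [|i ne_i_i0].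
- have [_ tt q_ee _] := Hqt i0.
  rewrite eq_sym (negbTE (q_ee _)) eqxx sub0r mulrN1 addr0 => /eqP.
  by rewrite oppr_eq0; apply/negP/sqr_eq1_neq0.
- have [_ _ q_ee _] := Hqt i.
  rewrite eq_sym (negbTE (q_ee _)) (inj_eq ee_inj) (inj_eq es_inj) eq_sym.
  by rewrite (negbTE ne_i_i0) subrr mulr0.
Qed.
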